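(* Assume that the distribution of $Z$ is aperiodic (the greatest common divisor of its support is $1$), that $\mathbb{E} Z=\infty$ and that $\mathbb{E}\min(Z,W)<\infty$. Then $\mathbb{E}[J_n]\to\infty$ as $n\to\infty$.
   Context: Let $Z,W,(Z_n)_{n\ge1},(W_n)_{n\ge1}$ be independent, identically distributed random variables taking values in $\mathbb{N}=\{1,2,3,\dots\}$. Define the shortest-edge chain $S_n=\{n\}$ for $n\le 0$ and $S_n=\{n\}\cup S_{n-\min(Z_n,W_n)}$ for $n\ge1$. For $n\ge1$ let $J_n=\sum_{m=1}^n \mathbb{1}_{\{m\in S_n\}}\mathbb{1}_{\{\max(Z_m,W_m)\ge m\}}$ (the number of vertices of $S_n$ with positive index whose longer outgoing edge reaches a non-positive integer). *)

From HB Require Import structures.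
From mathcomp Require Import all_boot all_order all_algebra.
From mathcomp Require Import all_classical all_reals all_analysis.
Set Implicit Arguments. Unset Strict Implicit. Unset Printing Implicit Defensive.
Import Order.TTheory GRing.Theory Num.Theory.
Local Open Scope classical_set_scope.
Local Open Scope ereal_scope.

Definition mutually_independent {d} {T : measurableType d} {R : realType}
  (P : probability T R) (I : eqType) (X : I -> T -> nat) : Prop :=
  forall (s : seq I) (A : I -> set nat), uniq s ->
    P [set t | forall i, i \in s -> A i (X i t)]
    = \prod_(i <- s) P (X i @^-1` A i).

Definition identically_distributed {d} {T : measurableType d} {R : realType}
  (P : probability T R) (I : Type) (X : I -> T -> nat) : Prop :=
  forall i j (k : nat), P (X i @^-1` [set k]) = P (X j @^-1` [set k]).

Definition aperiodic {d} {T : measurableType d} {R : realType}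
  (P : probability T R) (Y : T -> nat) : Prop :=
  forall dv : nat, (forall k : nat, 0 < P (Y @^-1` [set k]) -> (dv %| k)%N) ->
    dv = 1%N.

(* Positive part of the shortest-edge chain.  [f m] = min(Z_m, W_m).
   [chain f fuel n] lists the elements of S_n with positive index, starting
   from n >= 1: S_n = {n} ∪ S_{n - f n}; if n - f n <= 0 the rest of the chain
   consists of non-positive integers only (S_k = {k} for k <= 0). *)
Fixpoint chain (f : nat -> nat) (fuel n : nat) : seq nat :=
  match fuel with
  | 0 => [::]
  | fuel'.+1 =>
      if n == 0%N then [::]
      else n :: (if (f n < n)%N then chain f fuel' (n - f n) else [::])
  end.

(* Positive-index part of S_n for the realisation z, w of (Z_m), (W_m).
   Since min(Z_m,W_m) >= 1 the indices strictly decrease, so fuel n suffices. *)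
Definition Spos (z w : nat -> nat) (n : nat) : seq nat :=
  chain (fun m => minn (z m) (w m)) n n.

Definition Jn (z w : nat -> nat) (n : nat) : nat :=
  (\sum_(1 <= m < n.+1) ((m \in Spos z w n) && (m <= maxn (z m) (w m))))%N.

From HB Require Import structures.
From mathcomp Require Import all_boot all_order all_algebra.
From mathcomp Require Import all_classical all_reals all_analysis.
From mathcomp Require Import measurable_realfun zify lra.
Import Order.TTheory GRing.Theory Num.Theory.

(* Write q_k = P(Z >= k) ([ptail k] below); then E Z = sum_k q_k = oo while
   E min(Z,W) = sum_k q_k^2 < oo, so some L has sum_(k > L) q_k^2 <= 1/2.
   Cut {1, ..., n} into blocks (bL, bL + L].  If S_n misses a block, the chain
   jumps over it from some s > bL + L, which requires min(Z_s, W_s) >= s - bL;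
   by the union bound this has probability at most 1/2.  Hence with probability
   at least 1/2 the block contains a highest vertex m of S_n.  That event only
   involves the edges at indices above m, so it is independent of Z_m, and
   together with Z_m >= bL + L it makes m count in J_n.  Thus
   E J_n >= (1/2) sum_b q_(bL+L), and this diverges because
   L * sum_(b < B) q_(bL+L) >= sum_(k <= (B+1)L) q_k - L. *)

Section Chain.
Variable f : nat -> nat.

Lemma chain_le fuel n y : y \in chain f fuel n -> (y <= n)%N.
Proof.
elim: fuel n => [|fuel IH] n //=.
case: (n == 0%N) => //; rewrite in_cons => /orP[/eqP->//|].
by case: ifP => // _ /IH /leq_trans; apply; exact: leq_subr.
Qed.

Lemma chain_head fuel n : (0 < n <= fuel)%N -> n \in chain f fuel n.
Proof.
case: fuel => [|fuel] /andP[n_gt0 n_le] /=; first by move: (leq_trans n_gt0 n_le).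
by rewrite ifN ?mem_head // -lt0n.
Qed.

Hypothesis f_gt0 : forall k, (0 < f k)%N.

Lemma chain_jumps_over fuel n lo hi : (0 < lo)%N -> (n <= fuel)%N -> (hi < n)%N ->
  (forall x, (lo <= x <= hi)%N -> x \notin chain f fuel n) ->
  exists2 s, (hi < s <= n)%N & (s < lo + f s)%N.
Proof.
move=> lo_gt0; elim: fuel n => [|fuel IH] n n_le hi_lt avoid; first by lia.
have f_n := f_gt0 n.
move: avoid; rewrite /= ifN; last by lia.
case: ifP => fn avoid; last by exists n; lia.
have [lo_le|] := leqP lo (n - f n); last by exists n; lia.
have [next_le|hi_lt_next] := leqP (n - f n) hi.
  have := avoid (n - f n); rewrite lo_le next_le in_cons chain_head ?orbT //; lia.
have avoid_next x : (lo <= x <= hi)%N -> x \notin chain f fuel (n - f n).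
  by move=> /avoid; rewrite in_cons negb_or => /andP[].
have [s s_range s_jump] := IH (n - f n) ltac:(lia) hi_lt_next avoid_next.
by exists s; lia.
Qed.

End Chain.

Lemma eq_mem_chain f g fuel n m :
  (forall k, (m < k <= n)%N -> f k = g k) ->
  forall x, (m <= x)%N -> (x \in chain f fuel n) = (x \in chain g fuel n).
Proof.
elim: fuel n => [|fuel IH] n fg x mx //=.
case: (n == 0%N) => //; rewrite !in_cons.
have [n_le_m|m_lt_n] := leqP n m.
  have below h : x \in (if (h n < n)%N then chain h fuel (n - h n) else [::]) -> x = n.
    by case: ifP => // _ /chain_le x_le; lia.
  case: (boolP (x == n)) => //= x_neq.
  by apply/idP/idP => /below x_eq; rewrite x_eq eqxx in x_neq.
rewrite (fg n) ?m_lt_n ?leqnn //; case: ifP => // _; congr (_ || _).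
by apply: IH => // k /andP[mk kn]; apply: fg; lia.
Qed.

Local Open Scope classical_set_scope.
Local Open Scope ereal_scope.

Lemma measure_bigsetU_le {d} {T : measurableType d} {R : realType}
    (mu : measure T R) (I : Type) (s : seq I) (A : I -> set T) :
  (forall i, measurable (A i)) ->
  mu (\big[setU/set0]_(i <- s) A i) <= \sum_(i <- s) mu (A i).
Proof.
move=> A_meas; elim: s => [|i s IH]; first by rewrite !big_nil measure0.
rewrite !big_cons (le_trans (measureU2 _ _ _)) ?leeD2l //.
exact: bigsetU_measurable.
Qed.

Section NatValued.
Context {d : measure_display} {T : measurableType d} {R : realType}.
Implicit Types (g : T -> nat) (A : set nat).

Lemma preimage_nat_bigcup g A : g @^-1` A = \bigcup_(v in A) (g @^-1` [set v]).
Proof.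
apply/seteqP; split => t /=; first by exists (g t).
by case=> v Av /= ->.
Qed.

Lemma measurable_preimage_nat g A :
  (forall k, measurable (g @^-1` [set k])) -> measurable (g @^-1` A).
Proof.
by move=> g_meas; rewrite preimage_nat_bigcup; apply: bigcup_measurable.
Qed.

Lemma measurable_natr g : (forall k, measurable (g @^-1` [set k])) ->
  measurable_fun [set: T] (fun t => ((g t)%:R : R)%:E).
Proof.
move=> g_meas _ Y _; rewrite setTI.
exact: (measurable_preimage_nat g [set k | Y ((k%:R : R)%:E)] g_meas).
Qed.

Lemma natr_eseries (m : nat) :
  ((m%:R)%:E : \bar R) = \sum_(k <oo) ((k < m)%N%:R)%:E.
Proof.
rewrite (@nneseries_split R _ 0%N m); last by move=> k _; rewrite lee_fin.
rewrite eseries0 => [|k]; last by rewrite add0n => mk _; rewrite ltnNge mk.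
rewrite adde0 add0n sumEFin (eq_big_nat _ _ (F2 := fun _ => 1%R)) => [|i /andP[_ ->]] //.
by rewrite sumr_const_nat subn0.
Qed.

Variable P : probability T R.

Lemma probability_preimage_nat g A : (forall k, measurable (g @^-1` [set k])) ->
  P (g @^-1` A) = \sum_(v <oo | v \in A) P (g @^-1` [set v]).
Proof.
by move=> g_meas; rewrite preimage_nat_bigcup measure_bigcup // => v w _ _ [t [/= -> ->]].
Qed.

Lemma integral_nat_tail g : (forall k, measurable (g @^-1` [set k])) ->
  \int[P]_t ((g t)%:R)%:E = \sum_(k <oo) P [set t | (k < g t)%N].
Proof.
move=> g_meas.
have gt_meas k : measurable [set t | (k < g t)%N].
  exact: (measurable_preimage_nat g [set v | (k < v)%N] g_meas).
transitivity (\int[P]_t (\sum_(k <oo) (\1_[set t | (k < g t)%N] t)%:E)).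
  apply: eq_integral => t _; rewrite natr_eseries; apply: eq_eseriesr => k _.
  by rewrite indicE mem_setE.
rewrite integral_nneseries // => [|k]; last exact/measurable_EFinP/measurable_indic.
by apply: eq_eseriesr => k _; rewrite integral_indic // setIT.
Qed.

End NatValued.

Lemma nneseriesMr {R : realType} (f : nat -> \bar R) (c : \bar R) :
  c \is a fin_num -> (forall k, 0 <= f k) ->
  \sum_(k <oo) (f k * c) = (\sum_(k <oo) f k) * c.
Proof.
move=> /fineK <- f_ge0; rewrite muleC -nneseriesZl => [|k _]; last exact: f_ge0.
by apply: eq_eseriesr => k _; rewrite muleC.
Qed.

Section Independence.
Context {d : measure_display} {T : measurableType d} {R : realType}
  (P : probability T R) {I : eqType} (X : I -> T -> nat).
Hypotheses (X_meas : forall i k, measurable (X i @^-1` [set k]))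
  (X_indep : mutually_independent P X).

Definition depends_on (s : seq I) (F : (I -> nat) -> Prop) :=
  forall g h, (forall i, i \in s -> g i = h i) -> F g -> F h.

Definition event_of (F : (I -> nat) -> Prop) := [set t | F (fun i => X i t)].

Definition cylinder (r : seq I) (A : I -> set nat) :=
  [set t | forall i, i \in r -> A i (X i t)].

Lemma cylinder_cons i r A : cylinder (i :: r) A = X i @^-1` A i `&` cylinder r A.
Proof.
apply/seteqP; split => t /=.
  by move=> H; split => [|j jr]; apply: H; rewrite in_cons ?eqxx ?jr ?orbT.
by move=> [H1 H2] j; rewrite in_cons => /orP[/eqP->//|/H2].
Qed.

Lemma measurable_cylinder r A : measurable (cylinder r A).
Proof.
elim: r => [|i r IH]; first by rewrite [cylinder _ _](_ : _ = setT) //; exact/seteqP.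
by rewrite cylinder_cons; apply: measurableI => //; exact: measurable_preimage_nat.
Qed.

Lemma fin_num_prod_probability (r : seq I) (A : I -> set nat) :
  \prod_(i <- r) P (X i @^-1` A i) \is a fin_num.
Proof.
elim/big_ind: _ => //; first exact: fin_numM.
by move=> i _; apply: fin_num_measure; exact: measurable_preimage_nat.
Qed.

Lemma event_of_nil F : depends_on [::] F -> event_of F = set0 \/ event_of F = setT.
Proof.
move=> dF; have [F0|F0] := pselect (F (fun _ => 0%N)); [right|left].
  by apply/seteqP; split => // t _; exact: dF F0.
by apply/seteqP; split => // t /= Ft; apply: F0; exact: dF Ft.
Qed.

Lemma event_of_bigcup_coord a F : event_of F =
  \bigcup_v (event_of (fun g => F (fun i => if i == a then v else g i)) `&` X a @^-1` [set v]).
Proof.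
apply/seteqP; split => t; rewrite /event_of /=.
  move=> Ft; exists (X a t) => //; split => //=.
  by rewrite [G in F G](_ : _ = fun i => X i t) //; apply/funext => i; case: eqP => // ->.
case=> v _ [/= Fvt xv]; subst v.
by rewrite [G in F G](_ : _ = fun i => X i t) // in Fvt; apply/funext => i; case: eqP => // ->.
Qed.

(* Induction on s: splitting along the value v of the first coordinate a writes
   event_of F as a disjoint union of events depending on the rest of s only,
   intersected with the cylinder {X a = v}. *)
Lemma event_of_indep (s : seq I) : uniq s -> forall F, depends_on s F ->
  measurable (event_of F) /\
  forall r A, uniq r -> (forall i, i \in r -> i \notin s) ->
  P (event_of F `&` cylinder r A) = P (event_of F) * \prod_(i <- r) P (X i @^-1` A i).
Proof.
elim: s => [|a s IH] /=.
  move=> _ F /event_of_nil[]->; split => // r A ur _.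
    by rewrite set0I measure0 mul0e.
  by rewrite setTI probability_setT mul1e; exact: X_indep.
move=> /andP[a_notin_s us] F dF.
pose Fv (v : nat) g := F (fun i => if i == a then v else g i).
have dFv v : depends_on s (Fv v).
  by move=> g h gh; apply: dF => i; rewrite in_cons; case: eqP => // _ /= /gh.
have IHv v := IH us (Fv v) (dFv v).
have evE := event_of_bigcup_coord a F; rewrite -/(Fv _) in evE.
have mev : measurable (event_of F).
  rewrite evE; apply: bigcupT_measurable => v.
  by apply: measurableI; [exact: (IHv v).1|exact: X_meas].
have split_a r A : uniq r -> (forall i, i \in r -> i \notin a :: s) ->
    P (event_of F `&` cylinder r A) =
    \sum_(v <oo) (P (event_of (Fv v)) * P (X a @^-1` [set v]) *
                  \prod_(i <- r) P (X i @^-1` A i)).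
  move=> ur rs; pose A' v i := if i == a then [set v] else A i.
  have ar : a \notin r by apply/negP => /rs; rewrite mem_head.
  have cylE v : event_of (Fv v) `&` (X a @^-1` [set v]) `&` cylinder r A =
                event_of (Fv v) `&` cylinder (a :: r) (A' v).
    rewrite cylinder_cons -setIA /A' eqxx; congr (_ `&` (_ `&` _)).
    rewrite /cylinder; apply/seteqP; split => t /= H i ir; have := H i ir;
      by case: ifP => // /eqP ia; rewrite -ia ir in ar.
  rewrite evE setI_bigcupl measure_semi_bigcup.
  - apply: eq_eseriesr => v _; rewrite cylE.
    have disj : forall i, i \in a :: r -> i \notin s.
      move=> i; rewrite in_cons => /orP[/eqP -> //|ir].
      by apply: contra (rs i ir) => is_; rewrite in_cons is_ orbT.
    have := (IHv v).2 (a :: r) (A' v); rewrite /= ar ur => /(_ isT disj) ->.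
    rewrite big_cons /A' eqxx muleA; congr (_ * _ * _).
    by apply: eq_big_seq => i ir; case: eqP => // ia; rewrite -ia ir in ar.
  - by move=> v; rewrite cylE; apply: measurableI; [exact: (IHv v).1|exact: measurable_cylinder].
  - by move=> v w _ _ [t [[[_ /= <-] _] [[_ /= <-] _]]].
  - by rewrite -setI_bigcupl -evE; apply: measurableI => //; exact: measurable_cylinder.
split => // r A ur rs; rewrite split_a //.
have := split_a [::] (fun _ => setT) isT (fun i (H : i \in [::]) => ltac:(done)).
rewrite [cylinder _ _](_ : _ = setT) ?setIT; last exact/seteqP.
move=> ->; under [in RHS]eq_eseriesr do rewrite big_nil mule1.
by rewrite nneseriesMr ?fin_num_prod_probability // => v; exact: mule_ge0.
Qed.

Lemma measurable_event_of s F : uniq s -> depends_on s F -> measurable (event_of F).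
Proof. by move=> us dF; have [] := @event_of_indep s us F dF. Qed.

Lemma probability_event_of_cylinder s F r A : uniq s -> depends_on s F ->
  uniq r -> (forall i, i \in r -> i \notin s) ->
  P (event_of F `&` cylinder r A) = P (event_of F) * \prod_(i <- r) P (X i @^-1` A i).
Proof. by move=> us dF; have [_] := @event_of_indep s us F dF; apply. Qed.

End Independence.

Arguments measurable_event_of {d T R P I X} X_meas X_indep {s F}.
Arguments probability_event_of_cylinder {d T R P I X} X_meas X_indep {s F} r A.

Section NonnegSeries.
Context {R : realType} (a : nat -> R).
Hypothesis a_ge0 : forall k, (0 <= a k)%R.

Lemma nneseries_pinfty_partial_ge : \sum_(k <oo) (a k)%:E = +oo ->
  forall A : R, exists N, (A <= \sum_(0 <= k < N) a k)%R.
Proof.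
move=> a_oo A.
have : (fun N => \sum_(0 <= k < N) (a k)%:E) @ \oo --> +oo.
  by rewrite -a_oo; apply: is_cvg_nneseries => k _ _; rewrite lee_fin.
move/cvgeyPge => /(_ A) [N _ /(_ N (leqnn N))].
by rewrite sumEFin lee_fin; exists N.
Qed.

Lemma nneseries_fin_partial_small e : \sum_(k <oo) (a k)%:E < +oo -> (0 < e)%R ->
  exists L, forall p q, (L <= p)%N -> (\sum_(p <= k < q) a k <= e)%R.
Proof.
move=> a_fin e_gt0.
have /fine_cvgP[tail_fin] := nneseries_tail_cvg a_fin (fun k _ => a_ge0 k : 0 <= (a k)%:E).
move=> /cvgrPdist_lt /(_ _ e_gt0) tail_small.
have [L _ tailL] := filterI tail_fin tail_small.
exists L => p q /tailL[/fineK tailE].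
rewrite sub0r normrN ger0_norm ?fine_ge0 ?nneseries_ge0 // => [lt_e|k _ _]; last by rewrite lee_fin.
rewrite -lee_fin -sumEFin (le_trans (nneseries_lim_ge _ _)) //.
  by move=> k _ _; rewrite lee_fin.
by rewrite -tailE lee_fin ltW.
Qed.

End NonnegSeries.

Definition Spos_of (g : bool * nat -> nat) := Spos (fun m => g (false, m)) (fun m => g (true, m)).

Definition top_visit n hi m (g : bool * nat -> nat) : Prop :=
  m \in Spos_of g n /\ forall x, (m < x <= hi)%N -> x \notin Spos_of g n.

Definition coords_above m n : seq (bool * nat) :=
  [seq (b, k) | b <- [:: false; true], k <- index_iota m.+1 n.+1].

Lemma mem_coords_above m n b k : ((b, k) \in coords_above m n) = (m < k <= n)%N.
Proof.
apply/allpairsP/idP => [[[b' k'] [/= _ hk [_ ->]]]|H].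
  by move: hk; rewrite mem_index_iota; lia.
by exists (b, k); split => //=; [case: b|rewrite mem_index_iota; lia].
Qed.

Lemma uniq_coords_above m n : uniq (coords_above m n).
Proof.
apply: allpairs_uniq => //; first exact: iota_uniq.
by move=> [b k] [b' k'] _ _ /= [-> ->].
Qed.

Lemma eq_mem_Spos_of g h n m :
  (forall i, i \in coords_above m n -> g i = h i) ->
  forall x, (m <= x)%N -> (x \in Spos_of g n) = (x \in Spos_of h n).
Proof.
by move=> gh; apply: eq_mem_chain => k km; rewrite !gh // mem_coords_above.
Qed.

Lemma top_visit_or_jump g n lo hi : (forall i, 0 < g i)%N -> (0 < lo <= n)%N ->
  (exists2 m, (lo <= m <= hi)%N & top_visit n hi m g) \/
  (exists2 s, (hi < s <= n)%N & (s < lo + minn (g (false, s)) (g (true, s)))%N).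
Proof.
move=> g_gt0 lo_range; pose f m := minn (g (false, m)) (g (true, m)).
have f_gt0 k : (0 < f k)%N by rewrite leq_min !g_gt0.
have [[x x_visit]|none] :=
    pselect (exists x, (lo <= x <= hi)%N && (x \in chain f n n)).
  left; have x_le_hi y : (lo <= y <= hi)%N && (y \in chain f n n) -> (y <= hi)%N.
    by case/andP => /andP[].
  have [m /andP[m_range m_in] m_max] := ex_maxnP (ex_intro _ x x_visit) x_le_hi.
  exists m => //; split => // y /andP[my yh]; apply/negP => y_in.
  by have := m_max y; rewrite y_in yh andbT (leq_trans _ (ltnW my)); lia.
right; have hi_lt_n : (hi < n)%N.
  rewrite ltnNge; apply/negP => n_le; apply: none; exists n.
  by rewrite chain_head; lia.
apply: (@chain_jumps_over f f_gt0 n n lo hi) => //; first by lia.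
by move=> x x_range; apply/negP => x_in; apply: none; exists x; rewrite x_range.
Qed.

Lemma depends_top_visit n hi m : depends_on (coords_above m n) (top_visit n hi m).
Proof.
move=> g h gh [m_in above_m].
have eq_mem x : (m <= x)%N -> (x \in Spos_of g n) = (x \in Spos_of h n).
  exact: eq_mem_Spos_of.
split; first by rewrite -eq_mem.
by move=> x /andP[mx xh]; rewrite -eq_mem ?(ltnW mx) ?above_m ?mx.
Qed.

Lemma depends_Jn n k :
  depends_on (coords_above 0 n) (fun g => Jn (fun m => g (false, m)) (fun m => g (true, m)) n = k).
Proof.
move=> g h gh <-; apply: eq_big_nat => m /andP[m_gt0 m_le].
have := @eq_mem_Spos_of g h n 0 gh m isT; rewrite /Spos_of => ->.
by rewrite !gh // mem_coords_above; lia.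
Qed.

Lemma sum_blocks (F : nat -> nat) B L :
  (\sum_(b < B) \sum_(b * L <= k < b * L + L) F k = \sum_(0 <= k < B * L) F k)%N.
Proof.
elim: B => [|B IH]; first by rewrite big_ord0 big_geq.
by rewrite big_ord_recr /= IH mulSnr [RHS](@big_cat_nat _ _ _ (B * L)) ?leq_addr.
Qed.

Lemma Jn_ge_blocks z w n L B (c : nat -> nat -> bool) : (B * L <= n)%N ->
  (forall b k, (b * L <= k < b * L + L)%N -> c b k ->
    (k.+1 \in Spos z w n) && (k.+1 <= maxn (z k.+1) (w k.+1))%N) ->
  (\sum_(b < B) \sum_(b * L <= k < b * L + L) c b k <= Jn z w n)%N.
Proof.
move=> BL_le c_counts; pose J k := (k \in Spos z w n) && (k <= maxn (z k) (w k))%N.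
apply: (@leq_trans (\sum_(0 <= k < B * L) J k.+1)).
  rewrite -sum_blocks; apply: leq_sum => b _.
  rewrite big_nat_cond [X in (_ <= X)%N]big_nat_cond; apply: leq_sum => k /andP[k_range _].
  by rewrite /J; case: (c b k) (c_counts b k k_range) => // /(_ isT) ->.
rewrite /J /Jn big_add1 /= [X in (_ <= X)%N](@big_cat_nat _ _ _ (B * L)) //=.
exact: leq_addr.
Qed.

Section ShortestEdge.
Context {d : measure_display} {T : measurableType d} {R : realType}
  (P : probability T R) (X : bool * nat -> T -> nat).
Hypotheses (X_meas : forall i k, measurable (X i @^-1` [set k]))
  (X_gt0 : forall i t, (0 < X i t)%N)
  (X_indep : mutually_independent P X) (X_ident : identically_distributed P X).

Definition ptail k := fine (P (X (false, 0%N) @^-1` [set v | (k <= v)%N])).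

Lemma probability_ge_ptail i k : P (X i @^-1` [set v | (k <= v)%N]) = (ptail k)%:E.
Proof.
have -> : P (X i @^-1` [set v | (k <= v)%N]) = P (X (false, 0%N) @^-1` [set v | (k <= v)%N]).
  by rewrite !probability_preimage_nat //; apply: eq_eseriesr => v _; exact: X_ident.
by rewrite fineK // fin_num_measure //; exact: measurable_preimage_nat.
Qed.

Lemma ptail_ge0 k : (0 <= ptail k)%R.
Proof. by rewrite -lee_fin -(probability_ge_ptail (false, 0%N)) measure_ge0. Qed.

Lemma ptail_le1 k : (ptail k <= 1)%R.
Proof.
by rewrite -lee_fin -(probability_ge_ptail (false, 0%N)) probability_le1 //;
  exact: measurable_preimage_nat.
Qed.

Lemma le_ptail k k' : (k <= k')%N -> (ptail k' <= ptail k)%R.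
Proof.
move=> kk'; rewrite -lee_fin -!(probability_ge_ptail (false, 0%N)).
by apply: le_measure; rewrite ?inE; [exact: measurable_preimage_nat..|] => t /=; exact: leq_trans.
Qed.

Lemma min_ge_cylinder s k :
  [set t | (k <= minn (X (false, s) t) (X (true, s) t))%N] =
  cylinder X [:: (false, s); (true, s)] (fun _ => [set v | (k <= v)%N]).
Proof.
apply/seteqP; split => t; rewrite /cylinder /= leq_min.
  by move=> /andP[H1 H2] i; rewrite !inE => /orP[]/eqP->.
by move=> H; rewrite (H (false, s)) ?(H (true, s)) // !inE eqxx ?orbT.
Qed.

Lemma probability_min_ge s k :
  P [set t | (k <= minn (X (false, s) t) (X (true, s) t))%N] = (ptail k ^+ 2)%:E.
Proof.
by rewrite min_ge_cylinder X_indep // big_cons big_seq1 !probability_ge_ptail -EFinM.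
Qed.

Lemma eseries_ptail_pinfty : \int[P]_t ((X (false, 0%N) t)%:R)%:E = +oo ->
  \sum_(k <oo) (ptail k.+1)%:E = +oo.
Proof.
rewrite integral_nat_tail // => <-; apply: eq_eseriesr => k _.
by rewrite -(probability_ge_ptail (false, 0%N)).
Qed.

Lemma eseries_ptail_sqr_fin :
  \int[P]_t ((minn (X (false, 0%N) t) (X (true, 0%N) t))%:R)%:E < +oo ->
  \sum_(k <oo) (ptail k.+1 ^+ 2)%:E < +oo.
Proof.
rewrite integral_nat_tail => [|k].
  by rewrite (eq_eseriesr (fun k _ => probability_min_ge 0 k.+1)).
apply: (measurable_event_of X_meas X_indep (s := [:: (false, 0%N); (true, 0%N)])
  (F := fun g => minn (g (false, 0%N)) (g (true, 0%N)) = k)) => //.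
by move=> g h gh <-; rewrite !gh // !inE eqxx ?orbT.
Qed.

Lemma measurable_top_visit n hi m : measurable (event_of X (top_visit n hi m)).
Proof.
exact: (measurable_event_of X_meas X_indep (uniq_coords_above m n) (depends_top_visit n hi m)).
Qed.

Lemma sum_top_visit_ge n lo hi : (0 < lo <= n)%N ->
  (1 - \sum_(hi.+1 <= s < n.+1) ptail (s - lo).+1 ^+ 2 <=
   \sum_(lo <= m < hi.+1) fine (P (event_of X (top_visit n hi m))))%R.
Proof.
move=> lo_range.
pose V m := event_of X (top_visit n hi m).
pose W s := [set t | ((s - lo).+1 <= minn (X (false, s) t) (X (true, s) t))%N].
have V_meas m : measurable (V m) by exact: measurable_top_visit.
have W_meas s : measurable (W s) by rewrite /W min_ge_cylinder; exact: measurable_cylinder.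
pose UV := \big[setU/set0]_(m <- index_iota lo hi.+1) V m.
pose UW := \big[setU/set0]_(s <- index_iota hi.+1 n.+1) W s.
have UV_meas : measurable UV by apply: bigsetU_measurable => m _.
have UW_meas : measurable UW by apply: bigsetU_measurable => s _.
have cover : 1 <= P (UV `|` UW).
  rewrite -(probability_setT P) le_measure ?inE //; first exact: measurableU.
  move=> t _; rewrite /UV /UW -!bigcup_seq.
  have [[m m_range m_top]|[s s_range s_jump]] :=
    @top_visit_or_jump (fun i => X i t) n lo hi (X_gt0^~ t) lo_range.
    by left; exists m => //=; rewrite mem_index_iota; lia.
  have := X_gt0 (false, s) t; have := X_gt0 (true, s) t.
  by right; exists s; rewrite /= ?mem_index_iota /W /=; lia.
have := le_trans cover (measureU2 P UV_meas UW_meas).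
move=> /le_trans /(_ (leeD (measure_bigsetU_le P _ _ _ V_meas)
                           (measure_bigsetU_le P _ _ _ W_meas))).
rewrite (eq_bigr _ (fun m _ => esym (fineK (fin_num_measure P _ (V_meas m))))).
rewrite (eq_bigr _ (fun s _ => probability_min_ge s (s - lo).+1)) !sumEFin -EFinD lee_fin.
by move=> H; rewrite lerBlDr; exact: H.
Qed.

Definition counted_event n hi m :=
  event_of X (top_visit n hi m) `&` cylinder X [:: (false, m)] (fun _ => [set v | (hi <= v)%N]).

Lemma measurable_counted_event n hi m : measurable (counted_event n hi m).
Proof. by apply: measurableI; [exact: measurable_top_visit|exact: measurable_cylinder]. Qed.

Lemma probability_counted_event n hi m : P (counted_event n hi m) =
  (fine (P (event_of X (top_visit n hi m))) * ptail hi)%:E.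
Proof.
rewrite (probability_event_of_cylinder X_meas X_indep _ _ (uniq_coords_above m n)
  (depends_top_visit _ _ _)) // => [|i]; last first.
  by rewrite inE => /eqP ->; rewrite mem_coords_above ltnn.
by rewrite big_seq1 probability_ge_ptail EFinM
  (fineK (fin_num_measure P _ (measurable_top_visit _ _ _))).
Qed.

Lemma Jn_ge_counted n L B t : (B * L <= n)%N ->
  (\sum_(b < B) \sum_(b * L <= k < b * L + L) (t \in counted_event n (b * L + L) k.+1) <=
   Jn (fun m => X (false, m) t) (fun m => X (true, m) t) n)%N.
Proof.
move=> BL_le.
apply: (@Jn_ge_blocks _ _ n L B (fun b k => t \in counted_event n (b * L + L) k.+1)) => //.
move=> b k k_range.
rewrite inE => -[[k_in _] /(_ (false, k.+1) (mem_head _ _)) /= z_ge].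
by rewrite k_in leq_max (leq_trans _ z_ge) //; lia.
Qed.

Lemma measurable_Jn n : measurable_fun [set: T]
  (fun t => ((Jn (fun m => X (false, m) t) (fun m => X (true, m) t) n)%:R : R)%:E).
Proof.
apply: measurable_natr => k.
exact: (measurable_event_of X_meas X_indep (uniq_coords_above 0 n) (depends_Jn n k)).
Qed.

Section Blocks.
Variable L : nat.
Hypotheses (L_gt0 : (0 < L)%N)
  (ptail_sqr_small : forall p r, (L <= p)%N -> (\sum_(p <= k < r) ptail k.+1 ^+ 2 <= 2^-1)%R).

Lemma sum_top_visit_ge_half n b : (b * L + L <= n)%N ->
  (2^-1 <= \sum_(b * L <= k < b * L + L) fine (P (event_of X (top_visit n (b * L + L) k.+1))))%R.
Proof.
move=> block_le; have := sum_top_visit_ge n (b * L).+1 (b * L + L) ltac:(lia).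
have -> : (\sum_((b * L + L).+1 <= s < n.+1) ptail (s - (b * L).+1).+1 ^+ 2 =
    \sum_(L <= k < n - b * L) ptail k.+1 ^+ 2)%R.
  rewrite (_ : ((b * L + L).+1 = L + (b * L).+1)%N) ?big_addn ?subSS; last by lia.
  by apply: eq_bigr => k _; rewrite addnK.
rewrite big_add1 /=.
by have := ptail_sqr_small L (n - b * L) (leqnn L); lra.
Qed.

Lemma expectation_Jn_ge n B : (B * L <= n)%N ->
  ((\sum_(b < B) ptail (b * L + L)) / 2)%:E <=
  \int[P]_t ((Jn (fun m => X (false, m) t) (fun m => X (true, m) t) n)%:R)%:E.
Proof.
move=> BL_le.
pose G b k := counted_event n (b * L + L) k.+1.
pose h (t : T) := (\sum_(b < B) \sum_((b * L)%N <= k < (b * L + L)%N) (\1_(G b k) t : R)%:E)%E.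
have G_meas b k : measurable (G b k) by exact: measurable_counted_event.
have h_ge0 t : [set: T] t -> 0 <= h t.
  by move=> _; apply: sume_ge0 => b _; apply: sume_ge0 => k _; rewrite lee_fin.
have h_meas : measurable_fun [set: T] h.
  by do 2 apply: emeasurable_sum => ?; exact/measurable_EFinP/measurable_indic.
have h_le_J t : [set: T] t ->
    h t <= ((Jn (fun m => X (false, m) t) (fun m => X (true, m) t) n)%:R : R)%:E.
  move=> _; rewrite /h; under eq_bigr do under eq_bigr do rewrite indicE.
  under eq_bigr do rewrite sumEFin -natr_sum.
  by rewrite sumEFin -natr_sum lee_fin ler_nat Jn_ge_counted.
apply: le_trans (ge0_le_integral P measurableT h_ge0 h_meas (measurable_Jn n) h_le_J).
rewrite ge0_integral_sum //; first last.
- by move=> b t _; apply: sume_ge0 => k _; rewrite lee_fin.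
- by move=> b; apply: emeasurable_sum => k; exact/measurable_EFinP/measurable_indic.
rewrite mulr_suml -sumEFin; apply: lee_sum => b _.
rewrite ge0_integral_sum //; last by move=> k; exact/measurable_EFinP/measurable_indic.
under eq_bigr do rewrite integral_indic ?setIT //.
rewrite (eq_bigr _ (fun k _ => probability_counted_event n (b * L + L) k.+1)).
rewrite sumEFin lee_fin -mulr_suml.
have block_le : (b * L + L <= n)%N.
  by apply: leq_trans BL_le; rewrite -mulSnr leq_mul2r ltn_ord orbT.
by have := sum_top_visit_ge_half n b block_le; have := ptail_ge0 (b * L + L)%N; nra.
Qed.

End Blocks.

Lemma sum_ptail_le_blocks L B :
  (\sum_(0 <= k < B.+1 * L) ptail k.+1 <= L%:R + L%:R * \sum_(b < B) ptail (b * L + L))%R.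
Proof.
elim: B => [|B IH].
  rewrite big_ord0 mulr0 addr0 mul1n.
  by rewrite (le_trans (ler_sum _ (fun k _ => ptail_le1 k.+1))) // sumr_const_nat subn0.
rewrite (@big_cat_nat _ _ _ (B.+1 * L)) //=; last by rewrite leq_mul2r leqnSn orbT.
rewrite big_ord_recr /= mulrDr addrA lerD // mulr_natl.
have -> : (B.+2 * L = B.+1 * L + L)%N by rewrite mulSnr.
rewrite -[in leRHS](addKn (B.+1 * L) L) -sumr_const_nat.
apply: ler_sum_nat => k /andP[k_ge _]; apply: le_ptail.
by rewrite -mulSnr; lia.
Qed.

Lemma sum_ptail_blocks_unbounded L : (0 < L)%N ->
  \sum_(k <oo) (ptail k.+1)%:E = +oo ->
  forall A : R, exists N, forall B, (N <= B)%N -> (A <= \sum_(b < B) ptail (b * L + L))%R.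
Proof.
move=> L_gt0 ptail_oo A.
have [N partial_ge] := @nneseries_pinfty_partial_ge _ (fun k => ptail k.+1)
  (fun k => ptail_ge0 k.+1) ptail_oo (L%:R + L%:R * A)%R.
exists N => B NB; apply: (@le_trans _ _ (\sum_(b < N) ptail (b * L + L)%N)%R).
  have L_pos : (0 < L%:R :> R)%R by rewrite ltr0n.
  rewrite -(ler_pM2l L_pos) -(lerD2l L%:R).
  apply: le_trans partial_ge (le_trans _ (sum_ptail_le_blocks L N)).
  rewrite (@big_cat_nat _ _ _ N 0 (N.+1 * L)) //= ?lerDl ?sumr_ge0 // => [k _|].
    exact: ptail_ge0.
  by rewrite mulSn (leq_trans (leq_pmulr N L_gt0)) ?leq_addl.
rewrite (big_ord_widen B (fun b => ptail (b * L + L)) NB) big_mkcond /=.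
by apply: ler_sum => b _; case: ifP => // _; exact: ptail_ge0.
Qed.

End ShortestEdge.

Theorem mainTheorem9 (R : realType) (d : measure_display)
  (T : measurableType d) (P : probability T R)
  (X : bool * nat -> T -> nat)
  (Xmeas : forall i (k : nat), measurable (X i @^-1` [set k]))
  (Xpos : forall i t, (1 <= X i t)%N)
  (Xindep : mutually_independent P X)
  (Xident : identically_distributed P X)
  (Zaper : aperiodic P (X (false, 0%N)))
  (EZ : \int[P]_t ((X (false, 0%N) t)%:R)%:E = +oo)
  (Emin : \int[P]_t ((minn (X (false, 0%N) t) (X (true, 0%N) t))%:R)%:E < +oo) :
  (fun n : nat => \int[P]_t
      ((Jn (fun m => X (false, m) t) (fun m => X (true, m) t) n)%:R)%:E)
    @ \oo --> +oo.
Proof.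
have half_gt0 : (0 < 2^-1 :> R)%R by rewrite invr_gt0 ltr0n.
have [L0 ptail_sqr_small] := @nneseries_fin_partial_small _ (fun k => ptail P X k.+1 ^+ 2)%R
  (fun k => sqr_ge0 _) _ (eseries_ptail_sqr_fin P X Xmeas Xindep Xident Emin) half_gt0.
pose L := L0.+1.
have tail_small p r : (L <= p)%N -> (\sum_(p <= k < r) ptail P X k.+1 ^+ 2 <= 2^-1)%R.
  by move=> Lp; apply: ptail_sqr_small; exact: ltnW.
apply/cvgeyPge => A.
have [N blocks_ge] := sum_ptail_blocks_unbounded P X Xmeas Xident L (ltn0Sn L0)
  (eseries_ptail_pinfty P X Xmeas Xident EZ) (2 * A).
exists (N * L)%N => // n /= NL_le.
apply: le_trans (expectation_Jn_ge P X Xmeas Xpos Xindep Xident L (ltn0Sn L0) tail_small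
  n (n %/ L) (leq_trunc_div n L)).
by rewrite lee_fin; have := blocks_ge (n %/ L)%N; rewrite leq_divRL // => /(_ NL_le); lra.
Qed.
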